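(* If a spherical curve $P$ has a trigon of type A, then $r(P)\le 2$.
   Context: A spherical curve is a smooth immersion $P:S^1\to S^2$ whose self-intersections are finitely many transverse double points, called crossings. It is oriented and has at least one crossing. Regions are the components of $S^2\setminus P(S^1)$, and edges are the arcs of the curve between consecutive crossings. A trigon is a region bounded by three edges. The Gauss word is the cyclic word of crossings met in one traversal of the curve; each crossing appears twice. Crossings $a,b$ are interlaced if their occurrences alternate $a\dots b\dots a\dots b$ in the cyclic word, i.e., their chords cross in the chord diagram. Let a trigon have crossings $x,y,z$. Each of its three edges gives a block of two consecutive letters in the Gauss word, one block on each of $\{x,y\}$, $\{y,z\}$, $\{z,x\}$, so the word has the form $B_1W_1B_2W_2B_3W_3$ with the $W_i$ free of $x,y,z$. The trigon's type is determined by how many of the three pairs among $x,y,z$ are interlaced: type A if exactly two pairs are interlaced; type B if exactly one; type C if all three (e.g. $xy\,W_1\,zx\,W_2\,yz\,W_3$, as in the trefoil curve); type D if none (e.g. $xy\,W_1\,yz\,W_2\,zx\,W_3$). A crossing is reducible if no crossing is interlaced with it; equivalently, only three distinct regions meet at it. $P$ is reducible if it has a reducible crossing. The inverse-half-twisted splice $I$ at a crossing $p$ takes the curve with cyclic Gauss word $p\,A\,p\,B$ to the curve with Gauss word $\overline{A}\,B$, where $\overline{A}$ is $A$ reversed. Geometrically, $p$ is smoothed in the unique way giving a single closed curve, and the result is re-oriented. The reductivity $r(P)$ is the minimal number of successive applications of $I$ needed to reach a reducible spherical curve; $r(P)=0$ if $P$ is reducible. *)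

From mathcomp Require Import all_boot.
Set Implicit Arguments. Unset Strict Implicit. Unset Printing Implicit Defensive.

(* A spherical curve is encoded by its 4-regular map on the sphere:
   darts (half-edges) form a finite set [darts] in a finite type T;
   [sg] is the rotation of darts around a crossing (cycles of length 4),
   [al] is the edge involution (pairs the two ends of an edge).
   Faces (regions) are the orbits of [sg \o al]; going straight through a
   crossing is [sg \o sg], so following the curve is [tau = sg^2 \o al]. *)
Record curve (T : finType) := Curve {
  darts : {set T};
  sg : T -> T;
  al : T -> T }.

Section Curves.
Variable T : finType.
Implicit Types (C : curve T) (d e x y : T).

Definition tau C : T -> T := fun d => sg C (sg C (al C d)).
Definition phi C : T -> T := fun d => sg C (al C d).

Definition same_vertex C x y : bool := fconnect (sg C) x y.

(* the curve is a single closed curve: every dart lies on the traversal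
   starting at d0 or on the reverse traversal *)
Definition single_curve C : Prop :=
  exists2 d0, d0 \in darts C &
    forall d, d \in darts C -> fconnect (tau C) d0 d || fconnect (tau C) (al C d0) d.

Definition nfaces C : nat := fcard (phi C) (darts C).

Definition is_spherical_curve C : Prop :=
  darts C != set0 /\
  {in darts C, forall d, sg C d \in darts C /\ al C d \in darts C} /\
  {in darts C &, injective (sg C)} /\
  {in darts C, forall d, al C (al C d) = d /\ al C d != d} /\
  {in darts C, forall d, [/\ iter 4 (sg C) d = d, sg C d != d & sg C (sg C d) != d]} /\
  single_curve C /\
  (* Euler: V - E + F = 2 with V = #|darts|/4, E = #|darts|/2 *)
  4 * nfaces C = #|darts C| + 8.

(* Gauss word: the k-th letter of the traversal from d0 is the crossing of
   the dart iter k (tau C) d0; its length is the number of edges = #|darts|/2 *)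
Definition gauss_len C : nat := #|darts C| %/ 2.
Definition gauss_letter C d0 (k : nat) : T := iter k (tau C) d0.

Definition alternate C d0 x y : Prop :=
  exists i1 j1 i2 j2,
    [/\ i1 < j1, j1 < i2, i2 < j2 & j2 < gauss_len C] /\
    [/\ same_vertex C (gauss_letter C d0 i1) x, same_vertex C (gauss_letter C d0 j1) y,
        same_vertex C (gauss_letter C d0 i2) x & same_vertex C (gauss_letter C d0 j2) y].

(* crossings (represented by any of their darts) x and y are interlaced *)
Definition interlaced C x y : Prop :=
  ~~ same_vertex C x y /\
  exists2 d0, d0 \in darts C & (alternate C d0 x y \/ alternate C d0 y x).

Definition reducible_crossing C x : Prop :=
  x \in darts C /\ forall y, y \in darts C -> ~ interlaced C x y.

Definition reducible C : Prop := exists x, reducible_crossing C x.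

Definition exactly_two (P Q R : Prop) : Prop :=
  [\/ [/\ P, Q & ~ R], [/\ P, ~ Q & R] | [/\ ~ P, Q & R]].

Definition trigon_typeA C : Prop :=
  exists2 f, f \in darts C &
    let x := f in let y := phi C f in let z := phi C (phi C f) in
    [/\ phi C z = f, y != f,
        ~~ same_vertex C x y, ~~ same_vertex C y z & ~~ same_vertex C z x] /\
        exactly_two (interlaced C x y) (interlaced C y z) (interlaced C z x).

(* smoothing at the crossing of dart p; b selects one of the two ways of
   reconnecting the four darts p, sg p, sg^2 p, sg^3 p *)
Definition vertex_set C p : {set T} := [set d in darts C | same_vertex C p d].

Definition partner C p (b : bool) e : T :=
  if b then (if (e == p) || (e == sg C (sg C p)) then sg C e else iter 3 (sg C) e)
  else (if (e == sg C p) || (e == iter 3 (sg C) p) then sg C e else iter 3 (sg C) e).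

Definition follow C p b e : T :=
  if e \in vertex_set C p then al C (partner C p b e) else e.

Definition smooth C p (b : bool) : curve T :=
  Curve (darts C :\: vertex_set C p)
        (fun d => if d \in vertex_set C p then d else sg C d)
        (fun d => if d \in vertex_set C p then d else iter 4 (follow C p b) (al C d)).

(* inverse-half-twisted splice: the smoothing giving a single closed curve
   (the orientation of the result is irrelevant for everything below) *)
Definition I_step C C' : Prop :=
  exists2 p, p \in darts C & exists b, C' = smooth C p b /\ single_curve C'.

Fixpoint reductivity_le (k : nat) C : Prop :=
  match k with
  | 0 => reducible C
  | k'.+1 => reducible C \/ exists C', I_step C C' /\ reductivity_le k' C'
  end.

End Curves.

From mathcomp Require Import all_boot zify.
Set Implicit Arguments. Unset Strict Implicit. Unset Printing Implicit Defensive.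

(* We fix a traversal of the curve: the darts g 0, ..., g (N-1) met in order
   when following it, so that the k-th letter of the Gauss word is the
   crossing of g k.  Every crossing is visited at exactly two positions, and,
   since the Gauss word read from any dart is a rotation or a reflection of
   the traversal, two crossings are interlaced iff their chords in the cyclic
   order of positions cross.  The inverse-half-twisted splice at a crossing
   visited at positions 0 and m turns a traversal  p A p B  into one of
   B followed by the reverse of A.

   For a trigon xyz of type A with x, y not interlaced, the three edges of the
   trigon occupy three disjoint pairs of consecutive positions, and the
   interlacing pattern forces the word  x y .. z y .. x z ..  (up to exchanging
   x and y).  Splicing at y produces  x z .. x z .., and splicing then at z
   makes the two visits of x consecutive, so x becomes a reducible crossing. *)

Section LocalStructure.
Variable T : finType.
Implicit Types (C : curve T) (d e v w : T).

(* The dart opposite to d at its crossing: the curve goes straight from d to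
   opp d, so [tau C d = opp C (al C d)]. *)
Definition opp C d := sg C (sg C d).

Record wf_map C : Prop := WfMap {
  wf_sg : forall d, d \in darts C -> sg C d \in darts C;
  wf_al : forall d, d \in darts C -> al C d \in darts C;
  wf_sg4 : forall d, d \in darts C -> sg C (sg C (sg C (sg C d))) = d;
  wf_sg1 : forall d, d \in darts C -> sg C d <> d;
  wf_opp : forall d, d \in darts C -> opp C d <> d;
  wf_alK : forall d, d \in darts C -> al C (al C d) = d }.

Definition sgk C k v := iter k (sg C) v.

Variable C : curve T.
Hypothesis W : wf_map C.

Lemma sgD d : d \in darts C -> sg C d \in darts C. Proof. exact: (wf_sg W). Qed.
Lemma alD d : d \in darts C -> al C d \in darts C. Proof. exact: (wf_al W). Qed.
Lemma alK d : d \in darts C -> al C (al C d) = d. Proof. exact: (wf_alK W). Qed.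
Lemma oppD d : d \in darts C -> opp C d \in darts C. Proof. by move=> Hd; rewrite !sgD. Qed.
Lemma oppK d : d \in darts C -> opp C (opp C d) = d. Proof. exact: (wf_sg4 W). Qed.
Lemma tauD d : d \in darts C -> tau C d \in darts C. Proof. by move=> Hd; rewrite oppD ?alD. Qed.

Lemma opp_tau d : d \in darts C -> opp C (tau C d) = al C d.
Proof. by move=> Hd; rewrite oppK ?alD. Qed.

Lemma tau_opp_tau d : d \in darts C -> tau C (opp C (tau C d)) = opp C d.
Proof. by move=> Hd; rewrite opp_tau // /tau alK. Qed.

Lemma sg_inj d e : d \in darts C -> e \in darts C -> sg C d = sg C e -> d = e.
Proof. by move=> Hd He E; rewrite -(oppK Hd) -(oppK He) /opp E. Qed.

Lemma opp_inj d e : d \in darts C -> e \in darts C -> opp C d = opp C e -> d = e.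
Proof. by move=> Hd He /(sg_inj (sgD Hd) (sgD He)) /(sg_inj Hd He). Qed.

Lemma tau_inj d e : d \in darts C -> e \in darts C -> tau C d = tau C e -> d = e.
Proof.
move=> Hd He /(opp_inj (alD Hd) (alD He)) E.
by rewrite -(alK Hd) E alK.
Qed.

Lemma sgkD k v : v \in darts C -> sgk C k v \in darts C.
Proof. by move=> Hv; elim: k => // k IH; rewrite /sgk iterS sgD. Qed.

Lemma sgk_inj i j v : v \in darts C -> i < 4 -> j < 4 -> sgk C i v = sgk C j v -> i = j.
Proof.
move=> Hv.
have d01 := wf_sg1 W Hv; have d02 := wf_opp W Hv.
have d03 : sg C (sg C (sg C v)) <> v by move=> E; apply: d01; rewrite -{1}E [LHS]oppK.
have d12 : sg C (sg C v) <> sg C v by move/(sg_inj (sgD Hv) Hv).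
have d13 : sg C (sg C (sg C v)) <> sg C v by move/(sg_inj (sgD (sgD Hv)) Hv).
have d23 : sg C (sg C (sg C v)) <> sg C (sg C v).
  by move/(sg_inj (sgD (sgD Hv)) (sgD Hv)).
case: i => [|[|[|[|i]]]] // _; case: j => [|[|[|[|j]]]] //= _ E;
  first [done | by case: d01 | by case: d02 | by case: d03 | by case: d12
        | by case: d13 | by case: d23].
Qed.

Lemma sgk_neq_same i j v : v \in darts C -> i < 4 -> j < 4 -> i != j ->
  sgk C i v <> sgk C j v.
Proof. by move=> Hv Hi Hj /eqP Hij /(sgk_inj Hv Hi Hj). Qed.

Lemma same_vertexP e v : e \in darts C ->
  same_vertex C e v <-> [\/ v = e, v = sg C e, v = opp C e | v = sg C (opp C e)].
Proof.
move=> He; split.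
- move/iter_findex; move: (findex _ _ _) => n <-.
  elim: n => [|n IH]; first by constructor 1.
  rewrite iterS; case: IH => ->;
    [constructor 2 | constructor 3 | constructor 4 | constructor 1] => //.
  exact: oppK.
- by case=> ->; [exact: (fconnect_iter _ 0) | exact: (fconnect_iter _ 1)
  | exact: (fconnect_iter _ 2) | exact: (fconnect_iter _ 3)].
Qed.

Lemma sv_refl e : same_vertex C e e. Proof. exact: connect0. Qed.

Lemma sv_trans e1 e2 e3 :
  same_vertex C e1 e2 -> same_vertex C e2 e3 -> same_vertex C e1 e3.
Proof. exact: connect_trans. Qed.

Lemma sv_darts e v : e \in darts C -> same_vertex C e v -> v \in darts C.
Proof. by move=> He /(same_vertexP _ He) [] ->; rewrite ?sgD ?oppD. Qed.

Lemma sv_sym e v : e \in darts C -> same_vertex C e v -> same_vertex C v e.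
Proof.
move=> He Hv; apply/(same_vertexP _ (sv_darts He Hv)).
have turn4 : sg C (sg C (sg C (sg C e))) = e := oppK He.
by move/(same_vertexP _ He): Hv => [] ->;
  [constructor 1 | constructor 4 | constructor 3; rewrite oppK | constructor 2].
Qed.

Lemma sv_sgk k v : v \in darts C -> same_vertex C (sgk C k v) v.
Proof. by move=> Hv; apply: (sv_sym Hv); apply: fconnect_iter. Qed.

Lemma sv_sg e : same_vertex C e (sg C e).
Proof. exact: (fconnect_iter _ 1). Qed.

Lemma sv_opp e : same_vertex C e (opp C e).
Proof. exact: (fconnect_iter _ 2). Qed.

Lemma sv_oppl e v : e \in darts C -> same_vertex C (opp C e) v = same_vertex C e v.
Proof.
move=> He; apply/idP/idP; first exact: sv_trans (sv_opp e).
exact: sv_trans (sv_sym He (sv_opp e)).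
Qed.

Lemma sv_common e v w :
  e \in darts C -> same_vertex C e v -> same_vertex C e w -> same_vertex C v w.
Proof. by move=> He Hv; apply: sv_trans (sv_sym He Hv). Qed.

Lemma nsv_sym v w : w \in darts C -> ~~ same_vertex C v w -> ~~ same_vertex C w v.
Proof. by move=> Hw; apply: contra; apply: sv_sym. Qed.

Lemma sgk_neq i j v w : w \in darts C -> ~~ same_vertex C v w -> sgk C i v <> sgk C j w.
Proof.
move=> Hw nsv E; move/negP: nsv; apply.
by apply: (sv_trans (fconnect_iter _ i v)); rewrite -/(sgk C i v) E sv_sgk.
Qed.

End LocalStructure.

(* A traversal of the curve: the darts g 0, ..., g (N-1) are met in this order
   when following the curve (g k.+1 = tau (g k), g N = g 0); each dart occurs
   once, and every dart is either some g i or the opposite dart of some g i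
   (the same edge-end traversed backwards). *)
Record traversal (T : finType) (C : curve T) (g : nat -> T) (N : nat) : Prop := Traversal {
  trav_pos : 0 < N;
  trav_per : g N = g 0;
  trav_tau : forall k, k < N -> tau C (g k) = g k.+1;
  trav_inj : forall i j, i < N -> j < N -> g i = g j -> i = j;
  trav_opp : forall i j, i < N -> j < N -> g i <> opp C (g j);
  trav_cov : forall d, d \in darts C <-> exists2 i, i < N & (d = g i \/ d = opp C (g i)) }.

Section Traversal.
Variable T : finType.
Variable C : curve T.
Hypothesis W : wf_map C.
Variable g : nat -> T.
Variable N : nat.
Hypothesis R : traversal C g N.

Lemma gD k : k <= N -> g k \in darts C.
Proof.
move=> Hk; apply/(trav_cov R).
have [->|Hlt] := eqVneq k N; first rewrite (trav_per R).
- by exists 0; [exact: (trav_pos R) | left].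
- by exists k; [lia | left].
Qed.

Lemma opp_gD k : k <= N -> opp C (g k) \in darts C.
Proof. by move=> Hk; rewrite oppD ?gD. Qed.

Lemma al_g k : k < N -> al C (g k) = opp C (g k.+1).
Proof.
by move=> Hk; rewrite -(trav_tau R Hk) /tau -/(opp C _) oppK // alD // gD //; lia.
Qed.

Lemma al_opp_g k : k < N -> al C (opp C (g k.+1)) = g k.
Proof. by move=> Hk; rewrite -al_g // alK // gD; lia. Qed.

Lemma iter_tau_g i s : s + i <= N -> iter i (tau C) (g s) = g (s + i).
Proof.
elim: i => [|i IH] Hi; first by rewrite addn0.
by rewrite iterS IH ?(trav_tau R) ?addnS //; lia.
Qed.

Lemma iter_tau_opp_g i s : i <= s -> s <= N ->
  iter i (tau C) (opp C (g s)) = opp C (g (s - i)).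
Proof.
elim: i => [|i IH] Hi Hs; first by rewrite subn0.
rewrite iterS IH; try lia.
have -> : s - i = (s - i.+1).+1 by lia.
by rewrite /tau al_opp_g //; lia.
Qed.

Definition posF s i := if s + i < N then s + i else s + i - N.
Definition posB s i := if i <= s then s - i else s + N - i.

Lemma posF_small s i : s + i < N -> posF s i = s + i.
Proof. by rewrite /posF => ->. Qed.
Lemma posF_wrap s i : N <= s + i -> posF s i = s + i - N.
Proof. by rewrite /posF => H; rewrite ifF //; apply/negbTE; rewrite -leqNgt. Qed.

Lemma posF_lt s i : s < N -> i < N -> posF s i < N.
Proof. by rewrite /posF; case: ifP; lia. Qed.
Lemma posB_lt s i : s < N -> i < N -> posB s i < N.
Proof. by rewrite /posB; case: ifP; lia. Qed.

Lemma iter_tau_g_cyc i s : s < N -> i < N -> iter i (tau C) (g s) = g (posF s i).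
Proof.
move=> Hs Hi; rewrite /posF; case: ifP => H; first by rewrite iter_tau_g //; lia.
have -> : i = (s + i - N) + (N - s) by lia.
rewrite iterD iter_tau_g; last by lia.
have -> : s + (N - s) = N by lia.
by rewrite (trav_per R) iter_tau_g /=; [congr g|]; lia.
Qed.

Lemma iter_tau_opp_g_cyc i s : s < N -> i < N ->
  iter i (tau C) (opp C (g s)) = opp C (g (posB s i)).
Proof.
move=> Hs Hi; rewrite /posB; case: ifP => H; first by rewrite iter_tau_opp_g //; lia.
have -> : i = (i - s) + s by lia.
rewrite iterD iter_tau_opp_g ?subnn; try lia.
rewrite -(trav_per R) iter_tau_opp_g; try lia; congr (opp C (g _)); lia.
Qed.

Lemma gauss_letterE d0 : d0 \in darts C -> exists2 s, s < N &
  (forall i, i < N -> gauss_letter C d0 i = g (posF s i)) \/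
  (forall i, i < N -> gauss_letter C d0 i = opp C (g (posB s i))).
Proof.
move=> /(trav_cov R) [s Hs [->|->]]; exists s => //.
- by left=> i Hi; rewrite /gauss_letter iter_tau_g_cyc.
- by right=> i Hi; rewrite /gauss_letter iter_tau_opp_g_cyc.
Qed.

Lemma dartsE : darts C = [set g i | i : 'I_N] :|: [set opp C (g i) | i : 'I_N].
Proof.
apply/setP=> d; rewrite inE; apply/idP/orP.
- by move/(trav_cov R)=> [i Hi [->|->]]; [left|right]; apply/imsetP; exists (Ordinal Hi).
- by case=> /imsetP [i _ ->]; apply/(trav_cov R); exists i => //; [left|right].
Qed.

Lemma gauss_lenE : gauss_len C = N.
Proof.
have Dg (i : 'I_N) : g i \in darts C by apply: gD; apply: ltnW.
have g_inj : injective (fun i : 'I_N => g i).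
  by move=> i j /(trav_inj R (ltn_ord i) (ltn_ord j)) /val_inj.
have opp_g_inj : injective (fun i : 'I_N => opp C (g i)).
  by move=> i j /(opp_inj W (Dg i) (Dg j)) /g_inj.
have disj : [disjoint [set g i | i : 'I_N] & [set opp C (g i) | i : 'I_N]].
  apply/pred0P => d /=; apply/negP => /andP [/imsetP [i _ ->] /imsetP [j _ E]].
  exact: (trav_opp R (ltn_ord i) (ltn_ord j) E).
rewrite /gauss_len dartsE cardsU (disjoint_setI0 disj) cards0 subn0.
by rewrite !card_imset // card_ord addnn -muln2 mulnK.
Qed.

Lemma traversal_single : single_curve C.
Proof.
exists (g 0); first exact: gD.
move=> d /(trav_cov R) [i Hi [->|->]]; apply/orP; [left|right].
  by rewrite -(iter_tau_g (s := 0) (ltnW Hi)); apply: fconnect_iter.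
have HN := trav_pos R; rewrite al_g //.
case: i Hi => [|[|i]] Hi.
- by rewrite -(iter_tau_opp_g (s := 1) (i := 1)) //; apply: fconnect_iter.
- exact: connect0.
- apply: (connect_trans (y := opp C (g 0))).
    by rewrite -(iter_tau_opp_g (s := 1) (i := 1)) //; apply: fconnect_iter.
  rewrite -(trav_per R).
  have -> : opp C (g i.+2) = iter (N - i.+2) (tau C) (opp C (g N)).
    by rewrite iter_tau_opp_g; [congr (opp C (g _)) | ..]; lia.
  exact: fconnect_iter.
Qed.

Lemma two_positions v : v \in darts C -> exists a b, [/\ a < N, b < N, a <> b,
  same_vertex C (g a) v & same_vertex C (g b) v].
Proof.
move=> Hv; have [i Hi Ei] : exists2 i, i < N & (g i = v \/ g i = opp C v).
  move/(trav_cov R): Hv => [i Hi [E|E]]; exists i => //; [left|right] => //.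
  by rewrite E oppK // gD //; lia.
have Di : g i \in darts C by apply: gD; lia.
have Hiv : same_vertex C (g i) v.
  by case: Ei => ->; [exact: sv_refl | rewrite sv_oppl // sv_refl].
have /(trav_cov R) [j Hj Ej] := sgD W Di.
exists i, j; split => //.
- move=> E; subst j; case: Ej => E.
  + exact: (wf_sg1 W Di E).
  + by apply: (wf_sg1 W Di); apply: (sg_inj W (sgD W Di) Di); exact: (esym E).
- apply: (sv_trans _ Hiv); apply: (sv_sym W Di).
  case: Ej => E; first by rewrite -E; exact: sv_sg.
  apply/(same_vertexP W _ Di); constructor 4.
  by rewrite -[g j](oppK W) -?E // gD //; lia.
Qed.

Lemma at_most_two_positions a b v : a < N -> b < N -> a <> b ->
  same_vertex C (g a) v -> same_vertex C (g b) v ->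
  forall k, k < N -> same_vertex C (g k) v -> k = a \/ k = b.
Proof.
move=> Ha Hb Hab Hav Hbv k Hk Hkv.
have Da : g a \in darts C by apply: gD; lia.
have Hab' : same_vertex C (g a) (g b) by apply: sv_trans Hav (sv_sym W _ Hbv); apply: gD; lia.
have Hak : same_vertex C (g a) (g k) by apply: sv_trans Hav (sv_sym W _ Hkv); apply: gD; lia.
have [->|Hka] := eqVneq k a; first by left.
have [->|Hkb] := eqVneq k b; first by right.
exfalso; move/eqP: Hka => Hka; move/eqP: Hkb => Hkb.
have inj := trav_inj R; have dis := trav_opp R.
have S4 : sg C (sg C (sg C (sg C (g a)))) = g a := oppK W Da.
move/(same_vertexP W _ Da): Hab' => [] Eb; move/(same_vertexP W _ Da): Hak => [] Ek.
all: first [ by apply: Hab; apply: inj; rewrite ?Eb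
           | by apply: Hka; apply: inj; rewrite ?Ek
           | by apply: Hkb; apply: inj; rewrite ?Ek ?Eb
           | by apply: (dis b a Hb Ha); rewrite Eb
           | by apply: (dis k a Hk Ha); rewrite Ek
           | by apply: (dis k b Hk Hb); rewrite Ek Eb /opp S4
           | by apply: (dis b k Hb Hk); rewrite Ek Eb /opp S4 ].
Qed.

Lemma second_visit m : 0 < m -> m < N -> same_vertex C (g m) (g 0) ->
  g m = sg C (g 0) \/ g m = sg C (opp C (g 0)).
Proof.
move=> Hm HmN Hsv.
have D0 : g 0 \in darts C by apply: gD.
move: (sv_sym W (gD (ltnW HmN)) Hsv) => /(same_vertexP W _ D0) [] E.
- by move: (trav_inj R HmN (trav_pos R) E); lia.
- by left.
- by case: (trav_opp R HmN (trav_pos R) E).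
- by right.
Qed.

(* The edge from the crossing of d to the crossing of phi d (a side of the
   region of d) is traversed at positions t, t+1, in one of two directions. *)
Definition edge_at t d : Prop :=
  (g t = d /\ g t.+1 = sg C (phi C d)) \/ (g t = sgk C 3 (phi C d) /\ g t.+1 = opp C d).

Lemma edge_positions d : d \in darts C -> exists2 t, t < N & edge_at t d.
Proof.
move=> Hd; have Ha := alD W Hd.
have E3 : sgk C 3 (phi C d) = al C d by rewrite /sgk /phi /= -[X in _ = X](oppK W Ha).
case/(trav_cov R): (Hd) => i Hi [Ei|Ei].
  by exists i => //; left; rewrite -(trav_tau R Hi) -Ei.
have [i' [Hi' Hi'N Ei']] : exists i', [/\ 0 < i', i' <= N & d = opp C (g i')].
  case: i Hi Ei => [|i] Hi Ei; last by exists i.+1; split; [|apply: ltnW|].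
  by exists N; rewrite (trav_per R); split => //; exact: (trav_pos R).
case: i' Hi' Hi'N Ei' => // i' _ Hi'N Ed.
exists i'; first by lia.
by right; rewrite E3 Ed (oppK W) ?gD // al_opp_g.
Qed.

Definition rotg s k := g ((k + s) %% N).

Lemma rotgE s k : s < N -> k < N -> rotg s k = g (posF s k).
Proof.
move=> Hs Hk; rewrite /rotg /posF addnC; case: ifP => H; first by rewrite modn_small.
rewrite {1}(_ : s + k = (s + k - N) + N) ?modnDr ?modn_small //; lia.
Qed.

Lemma traversal_rot s : s < N -> traversal C (rotg s) N.
Proof.
move=> Hs; have HN := trav_pos R.
have rotE k : k < N -> rotg s k = g (posF s k) by exact: rotgE.
split => //.
- by rewrite /rotg modnDl add0n.
- move=> k Hk; rewrite rotE // /rotg /posF.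
  case: ifP => H1; rewrite (trav_tau R); try lia.
  + have [H2|H2] : (k.+1 + s < N) \/ (k.+1 + s = N) by lia.
      by rewrite modn_small; [congr g|]; lia.
    by rewrite H2 modnn -(trav_per R); congr g; lia.
  + have -> : (k.+1 + s) = (s + k - N).+1 + N by lia.
    by rewrite modnDr modn_small //; lia.
- move=> i j Hi Hj; rewrite !rotE // => /(trav_inj R) H.
  by move: H; rewrite /posF; do 2 case: ifP => ?; lia.
- by move=> i j Hi Hj; rewrite !rotE //; apply: (trav_opp R); apply: posF_lt.
- move=> d; split.
  + move/(trav_cov R) => [i Hi E].
    exists (if s <= i then i - s else i + N - s); first by case: ifP; lia.
    rewrite rotE; last by case: ifP; lia.
    suff -> : posF s (if s <= i then i - s else i + N - s) = i by [].
    by case: (leqP s i) => ?; rewrite /posF; case: ifP; lia.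
  + by move=> [i Hi E]; apply/(trav_cov R); exists (posF s i); [apply: posF_lt | rewrite -rotE].
Qed.

End Traversal.

Definition ccw (x y z : nat) : Prop := (x < y < z) \/ (y < z < x) \/ (z < x < y).

(* The chord {a, b} separates c from d: the chords {a, b} and {c, d} cross. *)
Definition cross (a b c d : nat) : Prop := ~ (ccw a c b <-> ccw a d b).

Definition chords4 (a b c d : nat) : Prop :=
  a <> b /\ c <> d /\ a <> c /\ a <> d /\ b <> c /\ b <> d.

Lemma cross_sym a b c d : chords4 a b c d -> cross c d a b -> cross a b c d.
Proof. by rewrite /chords4 /cross /ccw; lia. Qed.

Lemma cross_of_alternation A B X Y i1 j1 i2 j2 :
  i1 < j1 -> j1 < i2 -> i2 < j2 ->
  (i1 = A \/ i1 = B) -> (j1 = X \/ j1 = Y) -> (i2 = A \/ i2 = B) -> (j2 = X \/ j2 = Y) ->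
  cross A B X Y.
Proof. by rewrite /cross /ccw; lia. Qed.

(* Conversely, crossing chords are met alternately in increasing order:
   writing P for "is an end of {a, b}" and Q for "is an end of {c, d}". *)
Lemma alternation_of_cross (P Q : nat -> Prop) a b c d :
  P a -> P b -> Q c -> Q d -> chords4 a b c d -> cross a b c d ->
  exists i1 j1 i2 j2, [/\ i1 < j1, j1 < i2 & i2 < j2] /\
    ([/\ P i1, Q j1, P i2 & Q j2] \/ [/\ Q i1, P j1, Q i2 & P j2]).
Proof.
rewrite /chords4 /cross /ccw => Pa Pb Qc Qd Hd Hc.
have : ((a < c < b /\ b < d) \/ (a < d < b /\ b < c)) \/
       ((b < c < a /\ a < d) \/ (b < d < a /\ a < c)) \/
       ((c < a < d /\ d < b) \/ (c < b < d /\ d < a)) \/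
       ((d < a < c /\ c < b) \/ (d < b < c /\ c < a)) by lia.
case=> [[[/andP [h1 h2] h3]|[/andP [h1 h2] h3]]|[[[/andP [h1 h2] h3]|[/andP [h1 h2] h3]]|
  [[[/andP [h1 h2] h3]|[/andP [h1 h2] h3]]|[[/andP [h1 h2] h3]|[/andP [h1 h2] h3]]]]].
- by exists a, c, b, d; split; [|left].
- by exists a, d, b, c; split; [|left].
- by exists b, c, a, d; split; [|left].
- by exists b, d, a, c; split; [|left].
- by exists c, a, d, b; split; [|right].
- by exists c, b, d, a; split; [|right].
- by exists d, a, c, b; split; [|right].
- by exists d, b, c, a; split; [|right].
Qed.

Definition preserves_ccw N (r : nat -> nat) : Prop :=
  forall x y z, x < N -> y < N -> z < N -> x <> y -> y <> z -> x <> z ->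
    ccw (r x) (r y) (r z) <-> ccw x y z.
Definition reverses_ccw N (r : nat -> nat) : Prop :=
  forall x y z, x < N -> y < N -> z < N -> x <> y -> y <> z -> x <> z ->
    ccw (r x) (r y) (r z) <-> ccw z y x.

Lemma cross_relabel N r a b c d : preserves_ccw N r \/ reverses_ccw N r ->
  a < N -> b < N -> c < N -> d < N -> chords4 a b c d ->
  cross (r a) (r b) (r c) (r d) -> cross a b c d.
Proof.
move=> Hr Ha Hb Hc Hd [Hab [Hcd [Hac [Had [Hbc Hbd]]]]].
rewrite /cross; case: Hr => Hr; rewrite (Hr a c b) ?(Hr a d b) //; try lia.
by rewrite /ccw; lia.
Qed.

Definition rotF N s x := if s <= x then x - s else x + N - s.
Definition rotB N s x := if x <= s then s - x else s + N - x.

Lemma rotF_preserves N s : s < N -> preserves_ccw N (rotF N s).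
Proof. by move=> Hs x y z *; rewrite /rotF /ccw; do 3 case: ifP => ?; lia. Qed.
Lemma rotB_reverses N s : s < N -> reverses_ccw N (rotB N s).
Proof. by move=> Hs x y z *; rewrite /rotB /ccw; do 3 case: ifP => ?; lia. Qed.

Lemma rotF_posF N s i : s < N -> i < N -> rotF N s (posF N s i) = i.
Proof. by move=> *; rewrite /posF; case: ifP => ?; rewrite /rotF; case: ifP => ?; lia. Qed.
Lemma rotB_posB N s i : s < N -> i < N -> rotB N s (posB N s i) = i.
Proof. by move=> *; rewrite /posB; case: ifP => ?; rewrite /rotB; case: ifP => ?; lia. Qed.

Section Interlacing.
Variable T : finType.
Variable C : curve T.
Hypothesis W : wf_map C.
Variable g : nat -> T.
Variable N : nat.
Hypothesis R : traversal C g N.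

Definition visits v a b : Prop :=
  [/\ a < N, b < N, a <> b, same_vertex C (g a) v & same_vertex C (g b) v].

Lemma visits_only v a b : visits v a b ->
  forall k, k < N -> same_vertex C (g k) v -> k = a \/ k = b.
Proof. by case=> Ha Hb Hab Hav Hbv; apply: (at_most_two_positions W R). Qed.

Lemma visits_darts v a b : visits v a b -> v \in darts C.
Proof. by case=> Ha _ _ Hav _; apply: (sv_darts W _ Hav); apply: (gD R); lia. Qed.

Lemma visits_exist v : v \in darts C -> exists a b, visits v a b.
Proof. exact: (two_positions W R). Qed.

Lemma visits_chords v w a b c d : visits v a b -> visits w c d ->
  ~~ same_vertex C v w -> chords4 a b c d.
Proof.
case=> Ha Hb Hab Hav Hbv [Hc Hd Hcd Hcw Hdw] nsv.
have neq k l : k < N -> same_vertex C (g k) v -> same_vertex C (g l) w -> k <> l.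
  move=> Hk Hkv Hlw E; subst l; move/negP: nsv; apply.
  by apply: (sv_common W _ Hkv Hlw); apply: (gD R); lia.
by rewrite /chords4; do !split => //; apply: neq.
Qed.

Lemma cross_of_alternate_relabel (r pos : nat -> nat) d0 v w a b c d :
  preserves_ccw N r \/ reverses_ccw N r ->
  (forall k, k < N -> pos k < N /\ r (pos k) = k) ->
  (forall k x, k < N -> same_vertex C (gauss_letter C d0 k) x -> same_vertex C (g (pos k)) x) ->
  visits v a b -> visits w c d -> ~~ same_vertex C v w ->
  alternate C d0 v w -> cross a b c d.
Proof.
move=> Hr Hpos Hlet Vv Vw nsv [i1 [j1 [i2 [j2 [[h1 h2 h3 h4] [s1 s2 s3 s4]]]]]].
rewrite (gauss_lenE W R) in h4.
have at_ends x p q k : visits x p q -> k < N ->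
    same_vertex C (gauss_letter C d0 k) x -> k = r p \/ k = r q.
  move=> Vx Hk /(Hlet _ _ Hk) Hx; have [Hpk <-] := Hpos k Hk.
  by case: (visits_only Vx Hpk Hx) => ->; [left|right].
have [[Ha Hb _ _ _] [Hc Hd _ _ _]] := (Vv, Vw).
apply: (cross_relabel Hr) => //; first exact: (visits_chords Vv Vw).
have [Hi1 Hj1 Hi2] : [/\ i1 < N, j1 < N & i2 < N] by split; lia.
apply: (cross_of_alternation h1 h2 h3);
  [exact: at_ends Vv Hi1 s1 | exact: at_ends Vw Hj1 s2
  | exact: at_ends Vv Hi2 s3 | exact: at_ends Vw h4 s4].
Qed.

Lemma cross_of_alternate d0 v w a b c d : d0 \in darts C ->
  visits v a b -> visits w c d -> ~~ same_vertex C v w ->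
  alternate C d0 v w -> cross a b c d.
Proof.
move=> Hd0; have [s Hs [Hword|Hword]] := gauss_letterE W R Hd0.
- apply: (cross_of_alternate_relabel (r := rotF N s) (pos := posF N s)).
  + by left; apply: rotF_preserves.
  + by move=> k Hk; rewrite posF_lt // rotF_posF.
  + by move=> k x Hk; rewrite Hword.
- apply: (cross_of_alternate_relabel (r := rotB N s) (pos := posB N s)).
  + by right; apply: rotB_reverses.
  + by move=> k Hk; rewrite posB_lt // rotB_posB.
  + by move=> k x Hk; rewrite Hword // sv_oppl // (gD R) // ltnW // posB_lt.
Qed.

Lemma not_interlaced_of_not_cross v w a b c d : visits v a b -> visits w c d ->
  ~ cross a b c d -> ~ interlaced C v w.
Proof.
move=> Vv Vw Hnc [nsv [d0 Hd0 [Halt|Halt]]]; apply: Hnc.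
  exact: (cross_of_alternate Hd0 Vv Vw nsv).
apply: cross_sym; first exact: (visits_chords Vv Vw).
by apply: (cross_of_alternate Hd0 Vw Vv _ Halt); rewrite (nsv_sym W) // (visits_darts Vw).
Qed.

Lemma interlaced_of_cross v w a b c d : visits v a b -> visits w c d ->
  ~~ same_vertex C v w -> cross a b c d -> interlaced C v w.
Proof.
move=> Vv Vw nsv Hc; split => //; exists (g 0); first exact: (gD R).
have letter k : k < N -> gauss_letter C (g 0) k = g k.
  by move=> Hk; rewrite /gauss_letter (iter_tau_g R (s := 0)) //; lia.
pose at_crossing x k := k < N /\ same_vertex C (gauss_letter C (g 0) k) x.
have at_end x p : p < N -> same_vertex C (g p) x -> at_crossing x p.
  by move=> Hp Hpx; split; rewrite ?letter.
have [[Ha Hb _ Hav Hbv] [Hc' Hd _ Hcw Hdw]] := (Vv, Vw).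
have [i1 [j1 [i2 [j2 [[h1 h2 h3] Halt]]]]] :=
  alternation_of_cross (at_end _ _ Ha Hav) (at_end _ _ Hb Hbv)
    (at_end _ _ Hc' Hcw) (at_end _ _ Hd Hdw) (visits_chords Vv Vw nsv) Hc.
rewrite /alternate (gauss_lenE W R).
case: Halt => [[[_ ?] [_ ?] [_ ?] [? ?]]|[[_ ?] [_ ?] [_ ?] [? ?]]]; [left|right];
  by exists i1, j1, i2, j2.
Qed.

End Interlacing.

Lemma orbit_period (T : finType) (f : T -> T) (D : {set T}) x : x \in D ->
  {in D, forall y, f y \in D} -> {in D &, injective f} ->
  exists N, [/\ 0 < N, iter N f x = x &
    forall i j, i < N -> j < N -> iter i f x = iter j f x -> i = j].
Proof.
move=> Hx fD finj.
have iterD k : iter k f x \in D by elim: k => //= k IH; apply: fD.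
have back i j : iter (i + j) f x = iter i f x -> iter j f x = x.
  elim: i => [|i IH]; first by rewrite add0n.
  by rewrite addSn !iterS => /(finj _ _ (iterD _) (iterD _)); exact: IH.
have [i [j Hij Eij]] : exists i : 'I_#|D|.+1, exists2 j : 'I_#|D|.+1, i < j &
    iter i f x = iter j f x.
  have /injectivePn [i [j Hij Eij]] : ~~ injectiveb (fun i : 'I_#|D|.+1 => iter i f x).
    apply/negP => /injectiveP Hinj.
    have Hs : [set iter (nat_of_ord i) f x | i : 'I_#|D|.+1] \subset D.
      by apply/subsetP => d /imsetP [i _ ->].
    by have := subset_leq_card Hs; rewrite card_imset // card_ord ltnn.
  have : (i : nat) != j by rewrite (inj_eq val_inj).
  by rewrite neq_ltn => /orP [] Hlt; [exists i; exists j | exists j; exists i] => //.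
have Pex : exists n, (0 < n) && (iter n f x == x).
  exists (j - i); rewrite subn_gt0 Hij; apply/eqP/(back i).
  by rewrite subnKC; [exact: esym Eij | exact: ltnW].
case: (ex_minnP Pex) => N /andP [HN /eqP HxN] Hmin; exists N; split => //.
have lt_inj k l : k < l -> l < N -> iter k f x <> iter l f x.
  move=> Hkl HlN E; have := Hmin (l - k).
  rewrite subn_gt0 Hkl (back k) ?eqxx; first by move=> /(_ isT); lia.
  by rewrite subnKC; [exact: esym E | exact: ltnW].
move=> k l Hk Hl E; case: (ltngtP k l) => // Hlt.
- by case: (lt_inj k l Hlt Hl E).
- by case: (lt_inj l k Hlt Hk (esym E)).
Qed.

Section Spherical.
Variable T : finType.
Variable C : curve T.
Hypothesis S : is_spherical_curve C.

Lemma spherical_wf : wf_map C.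
Proof.
case: S => _ [Hcl [_ [Hal [Hsg _]]]]; split.
- by move=> d /Hcl [].
- by move=> d /Hcl [].
- by move=> d /Hsg [].
- by move=> d /Hsg [_ /eqP].
- by move=> d /Hsg [_ _ /eqP].
- by move=> d /Hal [].
Qed.

Let W := spherical_wf.

Lemma al_neq d : d \in darts C -> al C d <> d.
Proof. by case: S => _ [_ [_ [Hal _]]] /Hal [_ /eqP]. Qed.

Lemma tau_orbit_not_reversed d0 i j : d0 \in darts C ->
  iter i (tau C) d0 <> opp C (iter j (tau C) d0).
Proof.
move=> Hd0; pose g k := iter k (tau C) d0.
have gD k : g k \in darts C by elim: k => //= k IH; apply: tauD.
rewrite -/(g i) -/(g j).
wlog Hij : i j / i <= j.
  move=> Hwlog E; case: (leqP i j) => [|/ltnW] H; first exact: Hwlog E.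
  by apply: (Hwlog j i H); rewrite E oppK.
(* an equation g i = opp (g j) propagates towards the middle *)
have mirror n : n <= j - i -> g i = opp C (g j) -> g (i + n) = opp C (g (j - n)).
  elim: n => [|n IH] Hn E; first by rewrite addn0 subn0.
  rewrite addnS /= -/(g _) IH //; last lia.
  by rewrite -[j - n](_ : (j - n.+1).+1 = _) ?(tau_opp_tau W) //; lia.
move=> E; pose t := i + (j - i) %/ 2.
have [Hr|Hr] : (j - i) %% 2 = 0 \/ (j - i) %% 2 = 1 by lia.
- have := mirror ((j - i) %/ 2) ltac:(lia) E.
  rewrite (_ : j - (j - i) %/ 2 = t); last lia.
  by move/esym; apply: (wf_opp W (gD t)).
- have := mirror ((j - i) %/ 2) ltac:(lia) E.
  rewrite (_ : j - (j - i) %/ 2 = t.+1); last lia.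
  by rewrite /= opp_tau // => /esym; apply: al_neq.
Qed.

(* A spherical curve has a traversal: follow the curve from the base dart of
   [single_curve] until it closes up. *)
Lemma spherical_traversal : exists g N, traversal C g N.
Proof.
case: (S) => _ [_ [_ [_ [_ [[d0 Hd0 Hcov] _]]]]].
pose g k := iter k (tau C) d0.
have gD k : g k \in darts C by elim: k => //= k IH; apply: tauD.
have [N [HN HgN Hinj]] := orbit_period Hd0 (fun d => tauD W (d := d)) (tau_inj W).
have gmul k m : g (k + m * N) = g k.
  elim: m => [|m IH]; first by rewrite mul0n addn0.
  by rewrite mulSn addnCA addnC /g iterD HgN; exact: IH.
have gmod k : g k = g (k %% N) by rewrite {1}(divn_eq k N) addnC gmul.
have back n k : iter n (tau C) (opp C (g (k + n))) = opp C (g k).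
  elim: n k => [|n IH] k; first by rewrite addn0.
  by rewrite iterSr addnS /g iterS (tau_opp_tau W); [exact: IH | exact: gD].
exists g, N; split => //.
- by move=> i j _ _; apply: tau_orbit_not_reversed.
- move=> d; split => [Hd|[i _ [->|->]]]; last 2 first.
  + exact: gD.
  + exact: oppD.
  case/orP: (Hcov d Hd) => /iter_findex; move: (findex _ _ _) => n <-.
  + by exists (n %% N); [rewrite ltn_pmod | left; rewrite -gmod].
  + rewrite -(opp_tau W Hd0) -/(g 1).
    exists ((1 + n * N - n) %% N); first by rewrite ltn_pmod.
    by right; rewrite -gmod -(back n) subnK ?gmul; [reflexivity | nia].
Qed.

End Spherical.

Ltac neq_sg := repeat match goal with
 | |- context [?a == ?b] =>
     have -> : (a == b) = false by apply/eqP; first [assumption | move/esym; assumption]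
 end.

(* The splice at the crossing p = g 0, visited again at position m: the Gauss
   word p A p B (A at positions 1..m-1, B at positions m+1..N-1) becomes
   B followed by A reversed, i.e. the traversal
     g (m+1), ..., g (N-1), opp (g (m-1)), ..., opp (g 1). *)
Section Splice.
Variable T : finType.
Variable C : curve T.
Hypothesis W : wf_map C.
Variable g : nat -> T.
Variable N : nat.
Hypothesis R : traversal C g N.
Variable m : nat.
Hypothesis Hm1 : 1 < m.
Hypothesis Hm2 : m.+1 < N.
Hypothesis Hsv : same_vertex C (g m) (g 0).

Let D := gD R.
Let Dopp := opp_gD W R.
Notation p := (g 0).
Notation V := (vertex_set C (g 0)).

Lemma pD : p \in darts C. Proof. exact: D. Qed.

Lemma in_V e : (e \in V) = (e \in darts C) && same_vertex C p e.
Proof. by rewrite inE. Qed.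

Lemma g_in_V i : i < N -> (g i \in V) = (i == 0) || (i == m).
Proof.
move=> Hi; rewrite in_V D ?(ltnW Hi) //=; apply/idP/orP.
- move/(sv_sym W pD) => Hip.
  have := at_most_two_positions W R (trav_pos R) (_ : m < N) _ (sv_refl C p) Hsv Hi Hip.
  by case; [lia | lia | move=> ->; left | move=> ->; right].
- by case=> /eqP ->; [exact: sv_refl | apply: (sv_sym W); [apply: D; lia |]].
Qed.

Lemma opp_g_in_V i : i < N -> (opp C (g i) \in V) = (i == 0) || (i == m).
Proof.
move=> Hi; rewrite -g_in_V // !in_V Dopp ?D ?(ltnW Hi) //=.
apply/idP/idP => H; last exact: sv_trans H (sv_opp _ _).
by apply: sv_trans H _; rewrite sv_oppl ?D ?(ltnW Hi) // sv_refl.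
Qed.

Lemma sg_in_V e : e \in darts C -> (sg C e \in V) = (e \in V).
Proof.
move=> He; rewrite !in_V sgD // He /=; apply/idP/idP => H.
- exact: sv_trans H (sv_sym W He (sv_sg _ _)).
- exact: sv_trans H (sv_sg _ _).
Qed.

Lemma g_notin_V i : i < N -> i != 0 -> i != m -> g i \notin V.
Proof. by move=> Hi H1 H2; rewrite g_in_V // (negbTE H1) (negbTE H2). Qed.
Lemma opp_g_notin_V i : i < N -> i != 0 -> i != m -> opp C (g i) \notin V.
Proof. by move=> Hi H1 H2; rewrite opp_g_in_V // (negbTE H1) (negbTE H2). Qed.

(* The smoothing that keeps a single curve reconnects the darts of p along
   the traversal: p with g m and opp p with opp (g m). *)
Definition splice_choice := g m == sg C p.

Lemma splice_partner :
  [/\ partner C p splice_choice p = g m, partner C p splice_choice (g m) = p,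
      partner C p splice_choice (opp C p) = opp C (g m)
    & partner C p splice_choice (opp C (g m)) = opp C p].
Proof.
have around i j : i < 4 -> j < 4 -> i != j -> sgk C i p <> sgk C j p.
  exact: sgk_neq_same W _ _ _ pD.
have d01 : sg C p <> p := around 1 0 isT isT isT.
have d02 : sg C (sg C p) <> p := around 2 0 isT isT isT.
have d03 : sg C (sg C (sg C p)) <> p := around 3 0 isT isT isT.
have d12 : sg C (sg C p) <> sg C p := around 2 1 isT isT isT.
have d13 : sg C (sg C (sg C p)) <> sg C p := around 3 1 isT isT isT.
have d23 : sg C (sg C (sg C p)) <> sg C (sg C p) := around 3 2 isT isT isT.
have E4 : sg C (sg C (sg C (sg C p))) = p := oppK W pD.
have E5 : sg C (sg C (sg C (sg C (sg C p)))) = sg C p by rewrite E4.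
have E6 : sg C (sg C (sg C (sg C (sg C (sg C p))))) = sg C (sg C p) by rewrite E4.
have E7 : sg C (sg C (sg C (sg C (sg C (sg C (sg C p)))))) = sg C (sg C (sg C p)).
  by rewrite E4.
rewrite /splice_choice /partner /opp /=.
have [Hm0 HmN] : 0 < m /\ m < N by lia.
case: (second_visit W R Hm0 HmN Hsv) => ->;
  do 4 (rewrite ?E7 ?E6 ?E5 ?E4 ?eqxx ?orbT ?orbF /=; neq_sg); by [].
Qed.

Definition spliced := smooth C p splice_choice.
Notation fol := (follow C p splice_choice).

Lemma sg_spliced d : d \notin V -> sg spliced d = sg C d.
Proof. by move=> H; rewrite /= (negbTE H). Qed.

Lemma opp_spliced d : d \in darts C -> d \notin V -> opp spliced d = opp C d.
Proof. by move=> Hd HV; rewrite /opp !sg_spliced // sg_in_V. Qed.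

Lemma al_spliced d : d \notin V -> al spliced d = iter 4 fol (al C d).
Proof. by move=> H; rewrite /= (negbTE H). Qed.

Lemma fol_out n e : e \notin V -> iter n fol e = e.
Proof. by move=> H; elim: n => // n IH; rewrite iterS IH /follow (negbTE H). Qed.

Lemma fol_in e : e \in V -> al C (partner C p splice_choice e) \notin V ->
  iter 4 fol e = al C (partner C p splice_choice e).
Proof.
move=> H1 H2; have -> : 4 = 3 + 1 by [].
have E1 : iter 1 fol e = al C (partner C p splice_choice e) by rewrite /= /follow H1.
by rewrite iterD E1 fol_out.
Qed.

Lemma al_spliced_g i : 0 < i -> i != m -> i.+1 < N -> i.+1 != m ->
  al spliced (g i) = opp C (g i.+1).
Proof.
move=> H0 Hm H1 Hm'; rewrite al_spliced; last by apply: g_notin_V => //; lia.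
by rewrite (al_g W R) ?fol_out //; [apply: opp_g_notin_V | lia].
Qed.

Lemma al_spliced_opp_g i : 1 < i -> i < N -> i != m -> i != m.+1 ->
  al spliced (opp C (g i)) = g i.-1.
Proof.
move=> H1 H2 H3 H4; rewrite al_spliced; last by apply: opp_g_notin_V; lia.
rewrite -{1}(prednK (_ : 0 < i)) ?(al_opp_g W R) ?fol_out //; try lia.
by apply: g_notin_V; lia.
Qed.

Lemma al_opp_p : al C (opp C p) = g N.-1.
Proof. by rewrite -(trav_per R) -{1}(_ : N.-1.+1 = N) ?(al_opp_g W R) //; lia. Qed.

Lemma al_opp_gm : al C (opp C (g m)) = g m.-1.
Proof. by rewrite -{1}(_ : m.-1.+1 = m) ?(al_opp_g W R) //; lia. Qed.

Lemma al_spliced_g_pred_m : al spliced (g m.-1) = g N.-1.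
Proof.
case: splice_partner => _ _ _ P4.
rewrite al_spliced; last by apply: g_notin_V; lia.
rewrite (al_g W R) (_ : m.-1.+1 = m); try lia.
have S1 : opp C (g m) \in V by rewrite opp_g_in_V ?eqxx ?orbT //; lia.
have S2 : al C (partner C p splice_choice (opp C (g m))) \notin V.
  by rewrite P4 al_opp_p; apply: g_notin_V; lia.
by rewrite (fol_in S1 S2) P4 al_opp_p.
Qed.

Lemma al_spliced_g_last : al spliced (g N.-1) = g m.-1.
Proof.
case: splice_partner => _ _ P3 _.
rewrite al_spliced; last by apply: g_notin_V; lia.
rewrite (al_g W R) (_ : N.-1.+1 = N) ?(trav_per R); try lia.
have S1 : opp C p \in V by rewrite opp_g_in_V ?eqxx //; lia.
have S2 : al C (partner C p splice_choice (opp C p)) \notin V.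
  by rewrite P3 al_opp_gm; apply: g_notin_V; lia.
by rewrite (fol_in S1 S2) P3 al_opp_gm.
Qed.

Lemma al_spliced_opp_g1 : al spliced (opp C (g 1)) = opp C (g m.+1).
Proof.
case: splice_partner => P1 _ _ _.
rewrite al_spliced; last by apply: opp_g_notin_V; lia.
rewrite (al_opp_g W R (k := 0)); last by lia.
have S1 : p \in V by rewrite g_in_V ?eqxx //; lia.
have S2 : al C (partner C p splice_choice p) \notin V.
  by rewrite P1 (al_g W R); [apply: opp_g_notin_V | ]; lia.
by rewrite (fol_in S1 S2) P1 (al_g W R) //; lia.
Qed.

Lemma al_spliced_opp_g_succ_m : al spliced (opp C (g m.+1)) = opp C (g 1).
Proof.
case: splice_partner => _ P2 _ _.
rewrite al_spliced; last by apply: opp_g_notin_V; lia.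
rewrite (al_opp_g W R); last by lia.
have S1 : g m \in V by rewrite g_in_V ?eqxx ?orbT //; lia.
have S2 : al C (partner C p splice_choice (g m)) \notin V.
  by rewrite P2 (al_g W R); [apply: opp_g_notin_V | ]; lia.
by rewrite (fol_in S1 S2) P2 (al_g W R) //; lia.
Qed.

(* The traversal of the spliced curve: B = g (m+1) .. g (N-1), then the arc
   A = 1 .. m-1 walked backwards; the value at N - 2 closes the cycle. *)
Definition splice_g k := if k < N - m.+1 then g (m.+1 + k)
  else if k < N - 2 then opp C (g (N - 2 - k)) else g m.+1.

Lemma splice_g_fst k : k < N - m.+1 -> splice_g k = g (m.+1 + k).
Proof. by rewrite /splice_g => ->. Qed.

Lemma splice_g_snd k : N - m.+1 <= k -> k < N - 2 -> splice_g k = opp C (g (N - 2 - k)).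
Proof. by rewrite /splice_g leqNgt => /negbTE -> ->. Qed.

Lemma splice_g_cases i : i < N - 2 ->
  (i < N - m.+1 /\ splice_g i = g (m.+1 + i)) \/
  (N - m.+1 <= i /\ splice_g i = opp C (g (N - 2 - i))).
Proof.
move=> Hi; rewrite /splice_g; case: ifP => H; first by left.
by right; rewrite Hi; split => //; lia.
Qed.

Lemma spliced_darts d : (d \in darts spliced) = (d \notin V) && (d \in darts C).
Proof. by rewrite /= in_setD. Qed.

Lemma splice_gD i : i < N - 2 -> splice_g i \in darts C /\ splice_g i \notin V.
Proof.
move=> Hi; case: (splice_g_cases Hi) => [[H ->]|[H ->]]; split.
- by apply: D; lia.
- by apply: g_notin_V; lia.
- by apply: Dopp; lia.
- by apply: opp_g_notin_V; lia.
Qed.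

Lemma tau_spliced d e : d \notin V -> al spliced d = e -> e \in darts C -> e \notin V ->
  tau spliced d = opp C e.
Proof. by move=> Hd Ha He HeV; rewrite /tau Ha -/(opp _ _) opp_spliced. Qed.

Lemma splice_tau k : k < N - 2 -> tau spliced (splice_g k) = splice_g k.+1.
Proof.
move=> Hk; have [Dk Vk] := splice_gD Hk.
case: (splice_g_cases Hk) => [[H1 E1]|[H1 E1]]; rewrite E1 in Dk Vk *.
- have [H2|H2] : k.+1 < N - m.+1 \/ k.+1 = N - m.+1 by lia.
  + rewrite (tau_spliced (e := opp C (g (m.+1 + k).+1))) //; first last.
    * by apply: opp_g_notin_V; lia.
    * by apply: Dopp; lia.
    * by apply: al_spliced_g; lia.
    rewrite (oppK W); last by apply: D; lia.
    by rewrite splice_g_fst // addnS.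
  + have Ek : m.+1 + k = N.-1 by lia.
    rewrite Ek in Vk *; rewrite (tau_spliced (e := g m.-1)) //; first last.
    * by apply: g_notin_V; lia.
    * by apply: D; lia.
    * exact: al_spliced_g_last.
    by rewrite splice_g_snd; [congr (opp C (g _)) | ..]; lia.
- have [H2|H2] : k.+1 < N - 2 \/ k.+1 = N - 2 by lia.
  + rewrite (tau_spliced (e := g (N - 2 - k).-1)) //; first last.
    * by apply: g_notin_V; lia.
    * by apply: D; lia.
    * by apply: al_spliced_opp_g; lia.
    by rewrite splice_g_snd; [congr (opp C (g _)) | ..]; lia.
  + have Ek : N - 2 - k = 1 by lia.
    rewrite Ek in Vk *; rewrite (tau_spliced (e := opp C (g m.+1))) //; first last.
    * by apply: opp_g_notin_V; lia.
    * by apply: Dopp; lia.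
    * exact: al_spliced_opp_g1.
    rewrite (oppK W); last by apply: D; lia.
    rewrite /splice_g H2; have -> : (N - 2 < N - m.+1) = false by lia.
    by rewrite ltnn.
Qed.

Lemma splice_inj i j : i < N - 2 -> j < N - 2 -> splice_g i = splice_g j -> i = j.
Proof.
move=> Hi Hj.
case: (splice_g_cases Hi) => [[H1 ->]|[H1 ->]]; case: (splice_g_cases Hj) => [[H2 ->]|[H2 ->]].
- by move/(trav_inj R); lia.
- by move=> E; exfalso; apply: (trav_opp R _ _ E); lia.
- by move=> E; exfalso; apply: (trav_opp R _ _ (esym E)); lia.
- move=> E; have [Di Dj] : N - 2 - i < N /\ N - 2 - j < N by lia.
  by have := trav_inj R Di Dj (opp_inj W (D (ltnW Di)) (D (ltnW Dj)) E); lia.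
Qed.

Lemma splice_opp i j : i < N - 2 -> j < N - 2 -> splice_g i <> opp spliced (splice_g j).
Proof.
move=> Hi Hj; have [Dj Vj] := splice_gD Hj; rewrite opp_spliced //.
case: (splice_g_cases Hi) => [[H1 ->]|[H1 ->]]; case: (splice_g_cases Hj) => [[H2 ->]|[H2 ->]].
- by apply: (trav_opp R); lia.
- rewrite (oppK W); last by apply: D; lia.
  move=> E; have [Di Dj'] : m.+1 + i < N /\ N - 2 - j < N by lia.
  by have := trav_inj R Di Dj' E; lia.
- move=> E; have [Di Dj'] : N - 2 - i < N /\ m.+1 + j < N by lia.
  by have := trav_inj R Di Dj' (opp_inj W (D (ltnW Di)) (D (ltnW Dj')) E); lia.
- rewrite (oppK W); last by apply: D; lia.
  by move=> E; apply: (trav_opp R _ _ (esym E)); lia.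
Qed.

Lemma dart_off_V d : d \in darts C -> d \notin V ->
  exists2 j, [/\ j < N, j != 0 & j != m] & d = g j \/ d = opp C (g j).
Proof.
move=> Hd HV; case/(trav_cov R): (Hd) => j Hj Ej; exists j => //; split => //.
all: have : (d \in V) = (j == 0) || (j == m) by case: Ej => ->; [apply: g_in_V | apply: opp_g_in_V].
all: by rewrite (negbTE HV) => /esym /norP [].
Qed.

Lemma splice_cov d : d \in darts spliced <->
  exists2 i, i < N - 2 & (d = splice_g i \/ d = opp spliced (splice_g i)).
Proof.
rewrite spliced_darts; split.
- case/andP=> HV Hd; have [j [Hj Hj0 Hjm] Ej] := dart_off_V Hd HV.
  have [Hlt|Hgt] : j < m \/ m < j by lia.
  + exists (N - 2 - j); first by lia.
    have -> : splice_g (N - 2 - j) = opp C (g j).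
      by rewrite splice_g_snd; [congr (opp C (g _)) | ..]; lia.
    rewrite opp_spliced; last (by apply: opp_g_notin_V); last by apply: Dopp; lia.
    rewrite (oppK W); last by apply: D; lia.
    by case: Ej; [right | left].
  + exists (j - m.+1); first by lia.
    have -> : splice_g (j - m.+1) = g j.
      by rewrite splice_g_fst; [congr g | ..]; lia.
    rewrite opp_spliced; last (by apply: g_notin_V); last by apply: D; lia.
    by case: Ej; [left | right].
- move=> [i Hi E]; have [Di Vi] := splice_gD Hi.
  case: E => ->; first by rewrite Vi Di.
  by rewrite opp_spliced // (oppD W) // andbT /opp !sg_in_V ?sgD.
Qed.

Lemma splice_traversal : traversal spliced splice_g (N - 2).
Proof.
split.
- lia.
- rewrite /splice_g; have -> : (N - 2 < N - m.+1) = false by lia.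
  by rewrite ltnn (_ : 0 < N - m.+1) ?addn0 //; lia.
- exact: splice_tau.
- exact: splice_inj.
- exact: splice_opp.
- exact: splice_cov.
Qed.

Lemma al_spliced_pair d : d \in darts spliced ->
  exists2 e, e \in darts spliced & al spliced d = e /\ al spliced e = d.
Proof.
rewrite spliced_darts => /andP [HV Hd].
have [j [Hj /eqP Hj0 /eqP Hjm] Ej] := dart_off_V Hd HV.
have in_g k : 0 < k < N -> k != m -> g k \in darts spliced.
  by move=> /andP [Hk0 HkN] Hkm; rewrite spliced_darts D ?g_notin_V ?andbT //; lia.
have in_opp_g k : 0 < k < N -> k != m -> opp C (g k) \in darts spliced.
  by move=> /andP [Hk0 HkN] Hkm; rewrite spliced_darts Dopp ?opp_g_notin_V ?andbT //; lia.
case: Ej => ->.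
- have [E1|[E1|E1]] : j.+1 = m \/ j.+1 = N \/ (j.+1 <> m /\ j.+1 <> N) by lia.
  + have -> : j = m.-1 by lia.
    by exists (g N.-1); [apply: in_g; lia | rewrite al_spliced_g_pred_m al_spliced_g_last].
  + have -> : j = N.-1 by lia.
    by exists (g m.-1); [apply: in_g; lia | rewrite al_spliced_g_pred_m al_spliced_g_last].
  + exists (opp C (g j.+1)); first by apply: in_opp_g; lia.
    by rewrite al_spliced_g ?al_spliced_opp_g //; lia.
- have [E1|[E1|E1]] : j = 1 \/ j = m.+1 \/ (1 < j /\ j <> m.+1) by lia.
  + subst j; exists (opp C (g m.+1)); first by apply: in_opp_g; lia.
    by rewrite al_spliced_opp_g1 al_spliced_opp_g_succ_m.
  + subst j; exists (opp C (g 1)); first by apply: in_opp_g; lia.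
    by rewrite al_spliced_opp_g1 al_spliced_opp_g_succ_m.
  + exists (g j.-1); first by apply: in_g; lia.
    rewrite al_spliced_opp_g ?al_spliced_g ?prednK //; lia.
Qed.

Lemma spliced_wf : wf_map spliced.
Proof.
have off d : d \in darts spliced -> d \in darts C /\ d \notin V.
  by rewrite spliced_darts => /andP [].
have sg_off d : d \in darts C -> d \notin V -> sg C d \in darts C /\ sg C d \notin V.
  by move=> Hd HV; rewrite sgD // sg_in_V.
have on d : d \in darts C -> d \notin V -> d \in darts spliced.
  by move=> Hd HV; rewrite spliced_darts HV.
split.
- by move=> d /off [Hd HV]; rewrite sg_spliced //; case: (sg_off _ Hd HV); apply: on.
- by move=> d /al_spliced_pair [e He [-> _]].
- move=> d /off [Hd HV]; have [D1 V1] := sg_off _ Hd HV.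
  have [D2 V2] := sg_off _ D1 V1; have [D3 V3] := sg_off _ D2 V2.
  by rewrite !sg_spliced //; apply: (oppK W).
- by move=> d /off [Hd HV]; rewrite sg_spliced //; apply: (wf_sg1 W).
- by move=> d /off [Hd HV]; rewrite opp_spliced //; apply: (wf_opp W).
- by move=> d /al_spliced_pair [e He [-> ->]].
Qed.

Lemma sv_spliced e v : e \in darts spliced -> v \in darts spliced ->
  same_vertex C e v -> same_vertex spliced e v.
Proof.
rewrite !spliced_darts => /andP [Ve De] _.
have offV k : iter k (sg C) e \notin V.
  by elim: k => //= k IH; rewrite sg_in_V // -/(sgk C k e) sgkD.
have iter_sg k : iter k (sg spliced) e = iter k (sg C) e.
  by elim: k => //= k ->; rewrite (negbTE (offV k)).
by move/iter_findex => <-; rewrite -iter_sg; apply: fconnect_iter.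
Qed.

End Splice.

Theorem splice_step T (C : curve T) g N m : wf_map C -> traversal C g N ->
  1 < m -> m.+1 < N -> same_vertex C (g m) (g 0) ->
  exists C', [/\ I_step C C', wf_map C', traversal C' (splice_g C g N m) (N - 2)
    & forall e v, e \in darts C' -> v \in darts C' ->
        same_vertex C e v -> same_vertex C' e v].
Proof.
move=> W R H1 H2 H3; have R' := splice_traversal W R H1 H2 H3.
have W' := spliced_wf W R H1 H2 H3.
exists (spliced C g m); split.
- exists (g 0); first exact: (gD R).
  exists (splice_choice C g m); split; first by [].
  exact: (@traversal_single _ (spliced C g m) W' _ _ R').
- exact: W'.
- exact: R'.
- exact: (sv_spliced W).
Qed.

(* lia after discarding all non-arithmetic hypotheses, which zify would
   otherwise try to process. *)
Ltac arith := repeat (match goal with H : ?P |- _ => lazymatch P with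
   | is_true (_ <= _) => fail | is_true (_ < _) => fail | @eq nat _ _ => fail
   | @eq bool _ _ => fail | ~ _ => fail | nat => fail | _ => clear H end end); lia.

(* A crossing met at two consecutive positions of a traversal is reducible:
   its chord is a side of the polygon and crosses no other chord. *)
Lemma consecutive_visits_reducible T (C : curve T) g N a : wf_map C ->
  traversal C g N -> a.+1 < N -> same_vertex C (g a.+1) (g a) -> reducible C.
Proof.
move=> W R Ha Hsv; exists (g a); split => [|y Hy]; first by apply: (gD R); arith.
have [c [d Vy]] := visits_exist W R Hy.
apply: (not_interlaced_of_not_cross W R (a := a) (b := a.+1) _ Vy).
  by split; [arith | exact: Ha | arith | exact: sv_refl | exact: Hsv].
by rewrite /cross /ccw; lia.
Qed.

(* If the traversal meets x at p and q and z right after each of them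
   (x z ... x z), splicing at z makes the two visits of x consecutive. *)
Lemma splice_separates T (C : curve T) g N p q : wf_map C -> traversal C g N ->
  p.+1 < q -> q.+1 < N ->
  same_vertex C (g q) (g p) -> same_vertex C (g q.+1) (g p.+1) ->
  exists2 C', I_step C C' & reducible C'.
Proof.
move=> W R Hpq HqN Sx Sz.
have Hp : p.+1 < N by arith.
pose h := rotg g N p.+1.
have hE k : k < N -> h k = g (posF N p.+1 k) by exact: rotgE.
have Sm : same_vertex C (h (q - p)) (h 0).
  rewrite !hE ?posF_small ?addn0; try arith.
  by rewrite (_ : p.+1 + (q - p) = q.+1); [exact: Sz | arith].
have [C' [HI W' R' Hsv']] := splice_step W (traversal_rot R Hp) (m := q - p)
  ltac:(arith) ltac:(arith) Sm.
exists C' => //.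
pose a := N - (q - p).+2.
have [a1 g'a g'a1] : [/\ a.+1 < N - 2, splice_g C h N (q - p) a = g p
    & splice_g C h N (q - p) a.+1 = opp C (g q)].
  split; first by arith.
  - by rewrite splice_g_fst ?hE ?posF_wrap; [congr g | ..]; arith.
  - by rewrite splice_g_snd ?hE ?posF_small; [congr (opp C (g _)) | ..]; arith.
apply: (consecutive_visits_reducible W' R' a1).
rewrite g'a g'a1; apply: Hsv'.
- by rewrite -g'a1; apply: (gD R'); arith.
- by rewrite -g'a; apply: (gD R'); arith.
- by rewrite (sv_oppl W); [exact: Sx | apply: (gD R); arith].
Qed.

(* The word  x y ... z y ... x z ...  (x at 0 and b, y at 1 and c+1, z at c
   and b+1) reduces in two splices: splicing at y reverses the arc between
   its visits and produces the pattern x z ... x z of [splice_separates]. *)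
Lemma double_splice T (C : curve T) g N c b : wf_map C -> traversal C g N ->
  2 <= c -> c + 2 <= b -> b + 2 <= N ->
  same_vertex C (g b) (g 0) -> same_vertex C (g c.+1) (g 1) ->
  same_vertex C (g b.+1) (g c) -> reductivity_le 2 C.
Proof.
move=> W R Hc Hcb HbN Sx Sy Sz.
have H1 : 1 < N by arith.
pose h := rotg g N 1.
have hE k : k < N -> h k = g (posF N 1 k) by exact: rotgE.
have Sm : same_vertex C (h c) (h 0).
  by rewrite !hE ?posF_small; [exact: Sy | ..]; arith.
have [C1 [HI1 W1 R1 Hsv1]] := splice_step W (traversal_rot R H1) (m := c)
  ltac:(arith) ltac:(arith) Sm.
set g1 := splice_g C h N c in R1 *.
have [g1p g1p1 g1q g1q1] : [/\ g1 (b - c - 2) = g b, g1 (b - c - 2).+1 = g b.+1,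
    g1 (N - c - 2) = g 0 & g1 (N - c - 2).+1 = opp C (g c)].
  split.
  - by rewrite /g1 splice_g_fst ?hE ?posF_small; [congr g | ..]; arith.
  - by rewrite /g1 splice_g_fst ?hE ?posF_small; [congr g | ..]; arith.
  - by rewrite /g1 splice_g_fst ?hE ?posF_wrap; [congr g | ..]; arith.
  - by rewrite /g1 splice_g_snd ?hE ?posF_small; [congr (opp C (g _)) | ..]; arith.
have D1 k : k <= N - 2 -> g1 k \in darts C1 by exact: (gD R1).
have [C2 HI2 red2] : exists2 C2, I_step C1 C2 & reducible C2.
  apply: (splice_separates W1 R1 (p := b - c - 2) (q := N - c - 2)); try arith.
  - apply: Hsv1; try (apply: D1; arith).
    by rewrite g1q g1p; apply: (sv_sym W) => //; apply: (gD R); arith.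
  - apply: Hsv1; try (apply: D1; arith).
    rewrite g1q1 g1p1 (sv_oppl W); last by apply: (gD R); arith.
    by apply: (sv_sym W) => //; apply: (gD R); arith.
by right; exists C1; split => //; right; exists C2; split => //; left.
Qed.

(* The three edges of a trigon xyz occupy position pairs {0,1} (x,y),
   {t2,t2+1} (y,z) and {t3,t3+1} (z,x) of a traversal. *)
Lemma typeA_configuration N t2 t3 xa ya yb zb zc xc :
  2 <= t2 -> t2.+1 < N -> 2 <= t3 -> t3.+1 < N -> t2 <> t3 -> t2 <> t3.+1 -> t2.+1 <> t3 ->
  ((xa = 0 /\ ya = 1) \/ (ya = 0 /\ xa = 1)) ->
  ((yb = t2 /\ zb = t2.+1) \/ (zb = t2 /\ yb = t2.+1)) ->
  ((zc = t3 /\ xc = t3.+1) \/ (xc = t3 /\ zc = t3.+1)) ->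
  ~ cross xa xc ya yb -> ~ ~ cross ya yb zb zc -> ~ ~ cross zb zc xa xc ->
  (xa = 0 /\ ya = 1 /\ zb = t2 /\ yb = t2.+1 /\ xc = t3 /\ zc = t3.+1 /\ t2 < t3) \/
  (ya = 0 /\ xa = 1 /\ yb = t2 /\ zb = t2.+1 /\ zc = t3 /\ xc = t3.+1 /\ t3 < t2).
Proof.
move=> ? ? ? ? ? ? ? [[-> ->]|[-> ->]] [[-> ->]|[-> ->]] [[-> ->]|[-> ->]];
  rewrite /cross /ccw; lia.
Qed.

Section Trigon.
Variable T : finType.
Variable C : curve T.
Hypothesis W : wf_map C.

Lemma edge_at_darts g t d : edge_at C g t d ->
  (g t = sgk C 0 d \/ g t = sgk C 3 (phi C d)) /\
  (g t.+1 = sgk C 1 (phi C d) \/ g t.+1 = sgk C 2 d).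
Proof. by case=> [[-> ->]|[-> ->]]; split; [left | left | right | right]. Qed.

Lemma edge_at_visits g t d : d \in darts C -> edge_at C g t d ->
  exists pd qd, [/\ (pd = t /\ qd = t.+1) \/ (qd = t /\ pd = t.+1),
    same_vertex C (g pd) d & same_vertex C (g qd) (phi C d)].
Proof.
move=> Hd; have Hd' : phi C d \in darts C by rewrite /phi sgD ?alD.
case=> [[E1 E2]|[E1 E2]].
- exists t, t.+1; split; first by left.
  + by rewrite E1; exact: (sv_sgk W 0 Hd).
  + by rewrite E2; exact: (sv_sgk W 1 Hd').
- exists t.+1, t; split; first by right.
  + by rewrite E2; exact: (sv_sgk W 2 Hd).
  + by rewrite E1; exact: (sv_sgk W 3 Hd').
Qed.

Ltac distinct_darts := first [by apply: (sgk_neq W) | by apply: (sgk_neq_same W)].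

Lemma pos_neq (g : nat -> T) i j (A B A' B' : T) : g i = A \/ g i = B -> g j = A' \/ g j = B' ->
  A <> A' -> A <> B' -> B <> A' -> B <> B' -> i <> j.
Proof.
move=> H1 H2 n1 n2 n3 n4 E; subst j; case: H1 => E1; case: H2 => E2; rewrite E1 in E2;
  [exact: n1 | exact: n2 | exact: n3 | exact: n4].
Qed.

Variable g : nat -> T.
Variable N : nat.
Hypothesis R : traversal C g N.

Lemma trigon_layout f : f \in darts C -> phi C (phi C (phi C f)) = f ->
  ~~ same_vertex C f (phi C f) -> ~~ same_vertex C (phi C f) (phi C (phi C f)) ->
  ~~ same_vertex C (phi C (phi C f)) f ->
  exists h t2 t3, [/\ traversal C h N, edge_at C h 0 f, edge_at C h t2 (phi C f),
    edge_at C h t3 (phi C (phi C f))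
    & [/\ 2 <= t2, t2.+1 < N, 2 <= t3, t3.+1 < N & [/\ t2 <> t3, t2 <> t3.+1 & t2.+1 <> t3]]].
Proof.
set y := phi C f; set z := phi C y => Hf Hphi nxy nyz nzx.
have Hy : y \in darts C by rewrite /y /phi sgD ?alD.
have Hz : z \in darts C by rewrite /z /phi sgD ?alD.
have nyx := nsv_sym W Hy nxy; have nzy := nsv_sym W Hz nyz; have nxz := nsv_sym W Hf nzx.
have [t1 Ht1 B1] := edge_positions W R Hf.
pose h := rotg g N t1; have Rh := traversal_rot R Ht1; have HN := trav_pos R.
have B1h : edge_at C h 0 f.
  have h0 : h 0 = g t1 by rewrite /h /rotg add0n modn_small.
  have h1 : h 1 = g t1.+1.
    rewrite /h /rotg add1n; have [E|E] : t1.+1 < N \/ t1.+1 = N by lia.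
    - by rewrite modn_small.
    - by rewrite E modnn (trav_per R).
  by rewrite /edge_at h0 h1.
have [t2 Ht2 B2] := edge_positions W Rh Hy.
have [t3 Ht3 B3] := edge_positions W Rh Hz.
exists h, t2, t3; split => //.
have [P0 P1] := edge_at_darts B1h.
have [Q2a Q2b] := edge_at_darts B2.
have [Q3a Q3b] := edge_at_darts B3; rewrite Hphi in Q3a Q3b.
have PN : h N = sgk C 0 f \/ h N = sgk C 3 y.
  by case: P0 => E; [left | right]; rewrite -E; exact: (trav_per Rh).
have n20 : t2 <> 0 by apply: (pos_neq Q2a P0); distinct_darts.
have n21 : t2 <> 1 by apply: (pos_neq Q2a P1); distinct_darts.
have n2N : t2.+1 <> N by apply: (pos_neq Q2b PN); distinct_darts.
have n30 : t3 <> 0 by apply: (pos_neq Q3a P0); distinct_darts.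
have n31 : t3 <> 1 by apply: (pos_neq Q3a P1); distinct_darts.
have n3N : t3.+1 <> N by apply: (pos_neq Q3b PN); distinct_darts.
have n23 : t2 <> t3 by apply: (pos_neq Q2a Q3a); distinct_darts.
have n23' : t2 <> t3.+1 by apply: (pos_neq Q2a Q3b); distinct_darts.
have n32' : t2.+1 <> t3 by apply: (pos_neq Q2b Q3a); distinct_darts.
by split; try split; arith.
Qed.

(* A trigon xyz whose crossings x, y are not interlaced while y, z and z, x
   are: by [typeA_configuration] the traversal has the shape required by
   [double_splice], with the roles of x and y possibly exchanged. *)
Lemma typeA_trigon_reducible f : f \in darts C -> phi C (phi C (phi C f)) = f ->
  ~~ same_vertex C f (phi C f) -> ~~ same_vertex C (phi C f) (phi C (phi C f)) ->
  ~~ same_vertex C (phi C (phi C f)) f ->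
  ~ interlaced C f (phi C f) -> interlaced C (phi C f) (phi C (phi C f)) ->
  interlaced C (phi C (phi C f)) f -> reductivity_le 2 C.
Proof.
move=> Hf Hphi nxy nyz nzx Ixy Iyz Izx.
have [h [t2 [t3 [Rh B1 B2 B3 [H2 H2' H3 H3' [n23 n23' n32']]]]]] :=
  trigon_layout Hf Hphi nxy nyz nzx.
set y := phi C f in nxy nyz Ixy Iyz Izx B1 B2 B3; set z := phi C y in nyz nzx Iyz Izx B2 B3.
have Hy : y \in darts C by rewrite /y /phi sgD ?alD.
have Hz : z \in darts C by rewrite /z /phi sgD ?alD.
have [xa [ya [Oa Sxa Sya]]] := edge_at_visits Hf B1.
have [yb [zb [Ob Syb Szb]]] := edge_at_visits Hy B2.
have [zc [xc [Oc Szc Sxc]]] := edge_at_visits Hz B3; rewrite -/z Hphi in Sxc.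
have [[Hxa Hxc nx] [Hya Hyb ny] [Hzb Hzc nz]] :
    [/\ [/\ xa < N, xc < N & xa <> xc], [/\ ya < N, yb < N & ya <> yb]
       & [/\ zb < N, zc < N & zb <> zc]].
  by move: Oa Ob Oc H2 H2' H3 H3' n23 n23' n32'; clear => *; split; split; lia.
have Vx : visits C h N f xa xc by [].
have Vy : visits C h N y ya yb by [].
have Vz : visits C h N z zb zc by [].
have Nxy : ~ cross xa xc ya yb by move/(interlaced_of_cross W Rh Vx Vy nxy).
have Cyz : ~ ~ cross ya yb zb zc by move/(not_interlaced_of_not_cross W Rh Vy Vz).
have Czx : ~ ~ cross zb zc xa xc by move/(not_interlaced_of_not_cross W Rh Vz Vx).
have Dh k : k < N -> h k \in darts C by move=> Hk; apply: (gD Rh); apply: ltnW.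
have same k l v : same_vertex C (h k) v -> same_vertex C (h l) v -> l < N ->
    same_vertex C (h k) (h l).
  by move=> Hkv Hlv Hl; apply: (sv_trans Hkv); apply: (sv_sym W (Dh l Hl)).
case: (typeA_configuration H2 H2' H3 H3' n23 n23' n32' Oa Ob Oc Nxy Cyz Czx) =>
  [[? [? [? [? [? [? ?]]]]]]|[? [? [? [? [? [? ?]]]]]]]; subst.
- apply: (double_splice W Rh (c := t2) (b := t3)); try arith.
  + by apply: (same _ _ _ Sxc Sxa); arith.
  + by apply: (same _ _ _ Syb Sya); arith.
  + by apply: (same _ _ _ Szc Szb); arith.
- apply: (double_splice W Rh (c := t3) (b := t2)); try arith.
  + by apply: (same _ _ _ Syb Sya); arith.
  + by apply: (same _ _ _ Sxc Sxa); arith.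
  + by apply: (same _ _ _ Szb Szc); arith.
Qed.

End Trigon.

Theorem mainTheorem4 (T : finType) (P : curve T) :
  is_spherical_curve P -> trigon_typeA P -> reductivity_le 2 P.
Proof.
move=> S [f Hf [[Hphi _ nxy nyz nzx] Htype]].
have W := spherical_wf S; have [g [N R]] := spherical_traversal S.
have Hy : phi P f \in darts P by rewrite /phi sgD ?alD.
have Hz : phi P (phi P f) \in darts P by rewrite /phi sgD ?alD.
(* rotate the labels of the trigon so that the non-interlaced pair comes first *)
have Hphi' : phi P (phi P (phi P (phi P f))) = phi P f by rewrite Hphi.
case: Htype => [[Ixy Iyz Izx]|[Ixy Iyz Izx]|[Ixy Iyz Izx]].
- apply: (typeA_trigon_reducible W R (f := phi P (phi P f))); rewrite ?Hphi //.
- by apply: (typeA_trigon_reducible W R Hy Hphi'); rewrite ?Hphi.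
- exact: (typeA_trigon_reducible W R Hf Hphi).
Qed.
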